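(* Let $m,n$ be positive integers. For any $(A,\boldsymbol{\gamma})\in[0,1)^{m\times n}\times[0,1)^m$, we have $(A,\boldsymbol{\gamma})\in\Omega(m,n)$ if and only if $S_l(A,\boldsymbol{\gamma})<+\infty$ for all $l\in\mathbb{N}$.
   Context: $[0,1)^{m\times n}$ is the set of real $m\times n$ matrices with entries in $[0,1)$. For $\boldsymbol{x}\in\mathbb{R}^n$, $\|\boldsymbol{x}\|=\max_i|x_i|$; for $\boldsymbol{y}\in\mathbb{R}^m$, $\langle\boldsymbol{y}\rangle=\min_{\boldsymbol{p}\in\mathbb{Z}^m}\|\boldsymbol{y}-\boldsymbol{p}\|$. For $\psi:\mathbb{N}\to[0,\infty)$, $W_{m,n}(\psi)$ is the set of pairs $(A,\boldsymbol{\gamma})$ such that $\langle A\boldsymbol{q}-\boldsymbol{\gamma}\rangle<\psi(\|\boldsymbol{q}\|)$ for infinitely many $\boldsymbol{q}\in\mathbb{Z}^n$. ''Decreasing'' means non-increasing. $\mathcal{D}$ is the set of decreasing $\psi:\mathbb{N}\to[0,\infty)$ with $\sum_{q\ge1}q^{n-1}\psi(q)^m=\infty$; $\Omega(m,n)=\bigcap_{\psi\in\mathcal{D}}W_{m,n}(\psi)$. For $l\in\mathbb{N}$, $S_l(A,\boldsymbol{\gamma})=\sum_{t=l}^\infty t^{n-1}\min_{\boldsymbol{q}\in\mathbb{Z}^n,\ l\le\|\boldsymbol{q}\|\le t}\langle A\boldsymbol{q}-\boldsymbol{\gamma}\rangle^m$. *)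

From HB Require Import structures.
From mathcomp Require Import all_boot all_order all_algebra.
From mathcomp Require Import all_classical all_reals.
From mathcomp Require Import ereal topology normedtype sequences.
Set Implicit Arguments. Unset Strict Implicit. Unset Printing Implicit Defensive.
Import Order.TTheory GRing.Theory Num.Theory.
Local Open Scope classical_set_scope.
Local Open Scope ring_scope.

Section Defs.
Variable R : realType.

Definition normZ (n : nat) (q : 'cV[int]_n) : nat := \max_(i < n) `|q i ord0|%N.

Definition normR (m : nat) (y : 'cV[R]_m) : R :=
  \big[Num.max/0]_(i < m) `|y i ord0|.

Definition distZ (m : nat) (y : 'cV[R]_m) : R :=
  inf [set normR (y - map_mx (fun z : int => z%:~R) p) | p in [set: 'cV[int]_m]].

Definition Aqg (m n : nat) (A : 'M[R]_(m, n)) (g : 'cV[R]_m) (q : 'cV[int]_n)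
  : 'cV[R]_m := A *m map_mx (fun z : int => z%:~R) q - g.

Definition W (m n : nat) (psi : nat -> R) (A : 'M[R]_(m, n)) (g : 'cV[R]_m) : Prop :=
  ~ finite_set [set q : 'cV[int]_n | distZ (Aqg A g q) < psi (normZ q)].

(* psi : N -> [0,oo) decreasing (non-increasing) on N = {1,2,...};
   the value psi 0 is irrelevant. *)
Definition decreasing_nonneg (psi : nat -> R) : Prop :=
  (forall q, (1 <= q)%N -> 0 <= psi q) /\
  (forall q1 q2, (1 <= q1)%N -> (q1 <= q2)%N -> psi q2 <= psi q1).

Definition inD (m n : nat) (psi : nat -> R) : Prop :=
  decreasing_nonneg psi /\
  (\sum_(1 <= q <oo) (((q%:R : R) ^+ (n.-1) * psi q ^+ m)%:E) = +oo)%E.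

Definition Omega (m n : nat) (A : 'M[R]_(m, n)) (g : 'cV[R]_m) : Prop :=
  forall psi : nat -> R, inD m n psi -> W psi A g.

Definition S (m n : nat) (l : nat) (A : 'M[R]_(m, n)) (g : 'cV[R]_m) : \bar R :=
  (\sum_(l <= t <oo)
     (((t%:R : R) ^+ (n.-1) *
       inf [set distZ (Aqg A g q) ^+ m |
            q in [set q : 'cV[int]_n | (l <= normZ q <= t)%N]])%:E))%E.

Definition unit_entries (m n : nat) (A : 'M[R]_(m, n)) : Prop :=
  forall i j, 0 <= A i j /\ A i j < 1.

End Defs.

From HB Require Import structures.
From mathcomp Require Import all_boot all_order all_algebra.
From mathcomp Require Import all_classical all_reals.
From mathcomp Require Import ereal topology normedtype sequences exp.
From mathcomp Require Import zify.
Set Implicit Arguments. Unset Strict Implicit. Unset Printing Implicit Defensive.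
Import Order.TTheory GRing.Theory Num.Theory.
Local Open Scope classical_set_scope.
Local Open Scope ring_scope.

(* If S_l = +oo for some l, take psi(t) = (min_{l <= |q| <= t} <Aq - g>^m)^(1/m)
   (frozen at t = l below l).  Then psi is decreasing, its series is S_l, so
   psi lies in D, and yet <Aq - g> >= psi(|q|) as soon as |q| >= l, so only
   the finitely many q with |q| < l can approximate.  Conversely, if psi is in
   D and all q with <Aq - g> < psi(|q|) have |q| < l, then for every t >= l the
   minimum in S_l is at least psi(t)^m because psi is decreasing, so S_l
   dominates the divergent series of psi.  Neither direction uses that the
   entries of A and g lie in [0,1). *)

Section NonnegSeries.
Variable R : realType.
Local Open Scope ereal_scope.

Lemma lee_nneseries_from (u v : (\bar R)^nat) N :
  (forall i, (N <= i)%N -> 0 <= u i) -> (forall i, (N <= i)%N -> u i <= v i) ->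
  \sum_(N <= i <oo) u i <= \sum_(N <= i <oo) v i.
Proof.
move=> u0 uv.
have condE (w : (\bar R)^nat) :
    \sum_(N <= i <oo) w i = \sum_(N <= i <oo | (N <= i)%N) w i.
  apply/congr_lim/funext => k; rewrite big_nat_cond [RHS]big_nat_cond.
  by apply: eq_bigl => i; rewrite andbT andbC -andbA andbb.
by rewrite !condE; apply: lee_nneseries => // i _; apply: u0.
Qed.

Lemma fin_nneseries_pinfty_tail (u : R^nat) N M :
  (forall k, (N <= k)%N -> (0 <= u k)%R) -> (N <= M)%N ->
  \sum_(N <= k <oo) (u k)%:E = +oo <-> \sum_(M <= k <oo) (u k)%:E = +oo.
Proof.
move=> u0 NM; rewrite (nneseries_split _ (M - N)); last by move=> k /u0.
rewrite subnKC // sumEFin; split => [|->]; last exact: addey.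
have : 0 <= \sum_(M <= k <oo) (u k)%:E.
  by apply: nneseries_ge0 => k Mk _; rewrite lee_fin u0 // (leq_trans NM).
by case: (\sum_(M <= k <oo) (u k)%:E).
Qed.

End NonnegSeries.

Section IntegerVectors.
Variable n : nat.

Lemma normZ_const_mx k : (0 < n)%N -> normZ (const_mx k%:Z : 'cV[int]_n) = k.
Proof.
case: n => // n' _; rewrite /normZ.
under eq_bigr do rewrite mxE.
by rewrite big_const_ord; elim: n' => [|n' ih]; rewrite ?maxn0 // iterS ih maxnn.
Qed.

Lemma normZ_ge_entry (q : 'cV[int]_n) i : (`|q i ord0| <= normZ q)%N.
Proof. exact: (@leq_bigmax _ (fun i : 'I_n => `|q i ord0|%N) i). Qed.

(* Such a [q] is [v - l] for a vector [v] with entries in [0, 2l]. *)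
Lemma finite_normZ_lt l : finite_set [set q : 'cV[int]_n | (normZ q < l)%N].
Proof.
pose shift (v : 'cV['I_(l + l).+1]_n) : 'cV[int]_n :=
  \col_i ((v i ord0 : nat)%:Z - l%:Z).
apply: (@sub_finite_set _ _ (shift @` setT)); last first.
  by apply: finite_image; exact: finite_finset.
move=> q /= ql; exists (\col_i inord `|q i ord0 + l%:Z|) => //.
apply/matrixP => i j; rewrite (fintype.ord1 j) !mxE.
have qil := leq_ltn_trans (normZ_ge_entry q i) ql.
rewrite inordK; lia.
Qed.

Lemma finite_normZ_bounded (E : set 'cV[int]_n) :
  finite_set E -> exists L, forall q, E q -> (normZ q < L)%N.
Proof.
move=> /finite_fsetP [X ->]; exists (\max_(q <- finmap.enum_fset X) normZ q).+1.
by move=> q Xq; rewrite ltnS; apply: leq_bigmax_seq.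
Qed.

End IntegerVectors.

Section Distances.
Variable R : realType.

Lemma normR_ge0 m (y : 'cV[R]_m) : 0 <= normR y.
Proof. by rewrite /normR; elim/big_ind: _ => // x z x0 z0; rewrite le_max x0. Qed.

Lemma distZ_ge0 m (y : 'cV[R]_m) : 0 <= distZ y.
Proof.
apply: lb_le_inf; first by exists (normR (y - map_mx intr 0)), 0.
by move=> _ [p _ <-]; exact: normR_ge0.
Qed.

End Distances.

Lemma powR_invnK (R : realType) (x : R) k :
  (0 < k)%N -> 0 <= x -> (x `^ k%:R^-1) ^+ k = x.
Proof.
move=> k0 x0; rewrite -powR_mulrn ?powR_ge0 // -powRrM mulVf ?powRr1 //.
by rewrite pnatr_eq0 -lt0n.
Qed.

Section MinDist.
Variables (R : realType) (m n : nat) (A : 'M[R]_(m, n)) (g : 'cV[R]_m).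
Hypothesis n_gt0 : (0 < n)%N.

Definition min_dist (l t : nat) : R :=
  inf [set distZ (Aqg A g q) ^+ m |
       q in [set q : 'cV[int]_n | (l <= normZ q <= t)%N]].

Lemma SE l :
  S l A g = (\sum_(l <= t <oo) ((t%:R : R) ^+ n.-1 * min_dist l t)%:E)%E.
Proof. by []. Qed.

Lemma min_dist_le l t q :
  (l <= normZ q <= t)%N -> min_dist l t <= distZ (Aqg A g q) ^+ m.
Proof.
move=> lqt; apply: ge_inf; last by exists q.
by exists 0 => _ [p _ <-]; rewrite exprn_ge0 // distZ_ge0.
Qed.

Lemma min_dist_ge l t c : (l <= t)%N ->
  (forall q, (l <= normZ q <= t)%N -> c <= distZ (Aqg A g q) ^+ m) ->
  c <= min_dist l t.
Proof.
move=> lt cle; apply: lb_le_inf; last by move=> _ [q lqt <-]; apply: cle.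
by exists (distZ (Aqg A g (const_mx l%:Z)) ^+ m), (const_mx l%:Z);
  rewrite //= normZ_const_mx // leqnn.
Qed.

Lemma min_dist_ge0 l t : (l <= t)%N -> 0 <= min_dist l t.
Proof. by move=> lt; apply: min_dist_ge => // q _; rewrite exprn_ge0 ?distZ_ge0. Qed.

Lemma min_dist_antitone l t1 t2 :
  (l <= t1 <= t2)%N -> min_dist l t2 <= min_dist l t1.
Proof.
case/andP=> lt1 t12; apply: min_dist_ge => // q /andP[lq qt1].
by apply: min_dist_le; rewrite lq (leq_trans qt1).
Qed.

End MinDist.

Section DivergentS.
Variables (R : realType) (m n : nat) (A : 'M[R]_(m, n)) (g : 'cV[R]_m) (l : nat).
Hypotheses (m_gt0 : (0 < m)%N) (n_gt0 : (0 < n)%N) (l_gt0 : (0 < l)%N).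

Definition min_dist_root (t : nat) : R := min_dist A g l (maxn t l) `^ m%:R^-1.

Lemma min_dist_rootXm t : min_dist_root t ^+ m = min_dist A g l (maxn t l).
Proof. by rewrite powR_invnK // min_dist_ge0 // leq_maxr. Qed.

Lemma min_dist_root_decreasing : decreasing_nonneg min_dist_root.
Proof.
split=> [q _|q1 q2 _ q12]; first exact: powR_ge0.
apply: ge0_ler_powR; rewrite ?nnegrE ?invr_ge0 ?ler0n ?min_dist_ge0 ?leq_maxr //.
by apply: min_dist_antitone => //; rewrite leq_maxr; lia.
Qed.

Lemma min_dist_root_inD : S l A g = +oo%E -> inD m n min_dist_root.
Proof.
move=> Sl; split; first exact: min_dist_root_decreasing.
apply/(@fin_nneseries_pinfty_tail _ _ 1 l) => // [t _|].
  by rewrite mulr_ge0 // exprn_ge0 // powR_ge0.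
rewrite -Sl SE; apply/congr_lim/funext => k.
rewrite big_nat_cond [RHS]big_nat_cond; apply: eq_bigr => t /andP[/andP[lt _] _].
by rewrite min_dist_rootXm (maxn_idPl lt).
Qed.

Lemma finite_min_dist_root_approx :
  finite_set [set q : 'cV[int]_n | distZ (Aqg A g q) < min_dist_root (normZ q)].
Proof.
apply: sub_finite_set (finite_normZ_lt n l) => q /=.
rewrite ltnNge; apply: contraTN => lq.
rewrite -leNgt -(ler_pXn2r m_gt0) ?nnegrE ?powR_ge0 ?distZ_ge0 //.
by rewrite min_dist_rootXm (maxn_idPl lq) min_dist_le // lq leqnn.
Qed.

End DivergentS.

Section FinitelyManyApprox.
Variables (R : realType) (m n : nat) (A : 'M[R]_(m, n)) (g : 'cV[R]_m).
Variable psi : nat -> R.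
Hypotheses (n_gt0 : (0 < n)%N) (psi_dec : decreasing_nonneg psi).
Hypothesis psi_div :
  (\sum_(1 <= t <oo) (((t%:R : R) ^+ n.-1 * psi t ^+ m)%:E) = +oo)%E.

Lemma min_dist_ge_psi l t : (0 < l)%N -> (l <= t)%N ->
  (forall q, (l <= normZ q)%N -> psi (normZ q) <= distZ (Aqg A g q)) ->
  psi t ^+ m <= min_dist A g l t.
Proof.
move: psi_dec => [psi0 psi_le] l0 lt psi_dist.
apply: min_dist_ge => // q /andP[lq qt]; have q0 := leq_trans l0 lq.
rewrite lerXn2r ?nnegrE ?distZ_ge0 ?psi0 ?(leq_trans q0 qt) //.
exact: le_trans (psi_le _ _ q0 qt) (psi_dist _ lq).
Qed.

Lemma S_pinfty_of_finite_approx :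
  finite_set [set q : 'cV[int]_n | distZ (Aqg A g q) < psi (normZ q)] ->
  exists2 l, (0 < l)%N & S l A g = +oo%E.
Proof.
move: psi_dec => [psi0 _] /finite_normZ_bounded[L approxL].
have l0 : (0 < maxn L 1)%N by rewrite leq_maxr.
exists (maxn L 1) => //.
have term0 t : (0 < t)%N -> 0 <= t%:R ^+ n.-1 * psi t ^+ m.
  by move=> t0; rewrite mulr_ge0 ?exprn_ge0 ?psi0.
have /(fin_nneseries_pinfty_tail term0 l0) div_l := psi_div.
apply/eqP; rewrite eq_le leey -div_l SE /=.
apply: lee_nneseries_from => [t Lt|t Lt]; rewrite lee_fin.
  exact: term0 (leq_trans l0 Lt).
rewrite ler_wpM2l ?exprn_ge0 // min_dist_ge_psi ?leq_maxr // => q Lq.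
rewrite leNgt; apply/negP => /approxL.
by rewrite ltnNge (leq_trans (leq_maxl L 1) Lq).
Qed.

End FinitelyManyApprox.

Theorem lemma2p1 (R : realType) (m n : nat) (hm : (0 < m)%N) (hn : (0 < n)%N)
  (A : 'M[R]_(m, n)) (g : 'cV[R]_m)
  (hA : unit_entries A) (hg : unit_entries g) :
  Omega A g <-> (forall l : nat, (1 <= l)%N -> (S l A g < +oo)%E).
Proof.
split=> [Omega_Ag l l0 | S_fin psi psiD finite_approx].
- rewrite ltey; apply/eqP => Sl.
  apply: (Omega_Ag _ (min_dist_root_inD hm hn l0 Sl)).
  exact: finite_min_dist_root_approx.
- have [l l0 Sl] := S_pinfty_of_finite_approx hn psiD.1 psiD.2 finite_approx.
  by have := S_fin l l0; rewrite Sl ltxx.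
Qed.
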